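(* Let $N$ and $L$ be positive integers. A perfect star path of length $N$ with constant edge length $L$ exists if and only if $L$ and $N$ are coprime, $2\le L<N/2$, and $N\ge 5$.
   Context: A path of length $N$ is a vector $p=(p_0,\dots,p_{N-1})$ whose entries are the integers $0,\dots,N-1$ in some order; indices are cyclic, $p_N=p_0$. The path differences are $d_n=p_{n+1}-p_n$, and the steps are $s_n=d_n$ if $|d_n|<N/2$; $s_n=N/2$ if $|d_n|=N/2$; $s_n=d_n-N$ if $d_n>N/2$; $s_n=d_n+N$ if $d_n<-N/2$. The edge lengths are $|s_n|$. A star path is a path with $|s_n|\neq 1$ for all $n$. A perfect star path with constant edge length $L$ is a star path with $|s_n|=L$ for all $n\in\{0,\dots,N-1\}$. *)

From mathcomp Require Import all_boot all_order all_algebra all_fingroup.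
Set Implicit Arguments. Unset Strict Implicit. Unset Printing Implicit Defensive.
Import Order.TTheory GRing.Theory Num.Theory.
Local Open Scope ring_scope.

(* A path of length N: a permutation p of {0,...,N-1}, p_n = val (p n).
   Indices are cyclic: p_{n+1} is p (ordS n). *)

Definition step (N : nat) (d : int) : int :=
  if ((2 * `|d|) < N)%N then d
  else if ((2 * `|d|)%N == N) then (N %/ 2)%:Z
  else if 0 < d then d - N%:Z else d + N%:Z.

Definition pdiff (N : nat) (p : {perm 'I_N}) (n : 'I_N) : int :=
  (nat_of_ord (p (ordS n)))%:Z - (nat_of_ord (p n))%:Z.

Definition edge_len (N : nat) (p : {perm 'I_N}) (n : 'I_N) : nat :=
  `|step N (pdiff p n)|%N.

Definition star_path (N : nat) (p : {perm 'I_N}) : Prop :=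
  forall n : 'I_N, edge_len p n <> 1%N.

Definition perfect_star_path (N : nat) (p : {perm 'I_N}) (L : nat) : Prop :=
  star_path p /\ forall n : 'I_N, edge_len p n = L.

(* A path with constant edge length L moves by +-L modulo N at every step, so
   gcd(L, N) divides every difference p_i - p_j, in particular 1; the step
   bound |s| <= N/2 and coprimality (which rules out N = 2L) give 2L < N.
   Conversely, for L coprime to N with 2L < N, n |-> nL mod N is a permutation
   whose every step is exactly L. *)
From mathcomp Require Import all_boot all_order all_algebra all_fingroup zify ring.
Set Implicit Arguments. Unset Strict Implicit. Unset Printing Implicit Defensive.
Import Order.TTheory GRing.Theory Num.Theory.
Local Open Scope ring_scope.

Section Step.

Variable N : nat.

Lemma dvdz_step_sub (d : int) : (N%:Z %| step N d - d)%Z.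
Proof.
have : step N d - d = 0 \/ step N d - d = N%:Z \/ step N d - d = - N%:Z.
  by rewrite /step; case: ifP => ?; [|case: ifP => ?; [|case: ifP => ?]]; lia.
by case=> [->|[->|->]]; rewrite ?dvdz0 ?rpredN ?dvdzz.
Qed.

Lemma step_le_half (d : int) : (`|d| < N)%N -> (2 * `|step N d| <= N)%N.
Proof. by rewrite /step; case: ifP => ?; [|case: ifP => ?; [|case: ifP => ?]]; lia. Qed.

Lemma dvdz_small_eq0 (x : int) : (`|x| < N)%N -> (N%:Z %| x)%Z -> x = 0.
Proof.
rewrite dvdzE /= => ltxN dvdNx; case: (posnP `|x|%N) => [|xpos]; first lia.
by have := dvdn_leq xpos dvdNx; lia.
Qed.

Lemma step_eq_mod (d e : int) : (`|d| < N)%N -> (2 * `|e| < N)%N ->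
  (N%:Z %| d - e)%Z -> step N d = e.
Proof.
move=> ltdN lteN dvd_de; apply/eqP; rewrite -subr_eq0; apply/eqP/dvdz_small_eq0.
  by have := step_le_half ltdN; lia.
by rewrite -(subrKA d) rpredD ?dvdz_step_sub.
Qed.

End Step.

Lemma dvdz_cyclic_sub N (g : int) (f : 'I_N -> int) :
  (forall n, (g %| f (ordS n) - f n)%Z) -> forall i j, (g %| f i - f j)%Z.
Proof.
case: N f => [f _ [] //|N f dvd_step].
have dvd_f0 k : (k < N.+1)%N -> (g %| f (inord k) - f ord0)%Z.
  elim: k => [_|k IHk ltkN].
    by rewrite (_ : inord 0 = ord0) ?subrr ?dvdz0 //; apply: val_inj; rewrite /= inordK.
  have -> : inord k.+1 = ordS (inord k : 'I_N.+1).
    by apply: val_inj; rewrite /= !inordK ?modn_small //; lia.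
  by rewrite -(subrKA (f (inord k))) rpredD ?dvd_step ?IHk //; lia.
move=> i j; rewrite -(subrKA (f ord0)) rpredD //.
  by rewrite -(inord_val i) dvd_f0.
by rewrite -opprB rpredN -(inord_val j) dvd_f0.
Qed.

Section Paths.

Variables (N : nat) (p : {perm 'I_N}).

Lemma pdiff_bound n : (`|pdiff p n| < N)%N.
Proof. by rewrite /pdiff; have := ltn_ord (p (ordS n)); have := ltn_ord (p n); lia. Qed.

Lemma edge_len_double_le n : (2 * edge_len p n <= N)%N.
Proof. exact/step_le_half/pdiff_bound. Qed.

Lemma dvdz_pdiff (g : nat) n : (g %| edge_len p n)%N -> (g %| N)%N -> (g%:Z %| pdiff p n)%Z.
Proof.
move=> dvd_len dvd_N.
have -> : pdiff p n = step N (pdiff p n) - (step N (pdiff p n) - pdiff p n) by ring.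
by rewrite rpredB // ?dvdzE //; apply: dvdz_trans (dvdz_step_sub _ _).
Qed.

End Paths.

Lemma constant_edge_len_coprime N L (p : {perm 'I_N}) : (0 < N)%N ->
  (forall n, edge_len p n = L) -> coprime L N.
Proof.
move=> N_gt0 lenE; have [->|N_gt1] : N = 1%N \/ (1 < N)%N by lia.
  exact: coprimen1.
have dvd_p i j : ((gcdn L N)%:Z %| (p i)%:Z - (p j)%:Z)%Z.
  apply: (dvdz_cyclic_sub (f := fun n => (p n)%:Z)) => n.
  by apply: dvdz_pdiff; rewrite ?lenE ?dvdn_gcdl ?dvdn_gcdr.
have := dvd_p (p^-1 (Ordinal N_gt1))%g (p^-1 (Ordinal (ltnW N_gt1)))%g.
by rewrite !permKV dvdzE /= dvdn1.
Qed.

Lemma perfect_star_path_conditions N L (p : {perm 'I_N}) : (0 < N)%N -> (0 < L)%N ->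
  perfect_star_path p L -> [/\ coprime L N, (2 <= L)%N, (2 * L < N)%N & (5 <= N)%N].
Proof.
move=> N_gt0 L_gt0 [star lenE].
have coLN := constant_edge_len_coprime N_gt0 lenE.
pose n0 : 'I_N := Ordinal N_gt0.
have L_ne1 : L <> 1%N by rewrite -(lenE n0); apply: star.
have le2LN : (2 * L <= N)%N by rewrite -(lenE n0) edge_len_double_le.
have ne2LN : (2 * L)%N <> N.
  by move=> eqN; move: coLN; rewrite -eqN /coprime (gcdn_idPl (dvdn_mull 2 (dvdnn L))); lia.
by split=> //; lia.
Qed.

Section MulModPerm.

Variables (N L : nat).
Hypotheses (N_gt0 : (0 < N)%N) (coLN : coprime L N).

Definition mulmod (n : 'I_N) : 'I_N := Ordinal (ltn_pmod (n * L) N_gt0).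

Lemma mulmod_inj : injective mulmod.
Proof.
move=> a b /(congr1 val) /= eq_ab; apply: val_inj => /=.
wlog le_ab : a b eq_ab / (a <= b)%N.
  by move=> wlog_le; case: (leqP a b) => [|/ltnW] le; [|symmetry]; apply: wlog_le.
move/eqP: eq_ab; rewrite eq_sym eqn_mod_dvd ?leq_mul2r ?le_ab ?orbT //.
rewrite -mulnBl Gauss_dvdl 1?coprime_sym // => dvdN.
case: (posnP (b - a)%N) => [|pos]; first lia.
by have := dvdn_leq pos dvdN; have := ltn_ord b; lia.
Qed.

Definition mulmod_perm : {perm 'I_N} := perm mulmod_inj.

Lemma dvdz_pdiff_mulmod_perm n : (N%:Z %| pdiff mulmod_perm n - L%:Z)%Z.
Proof.
rewrite /pdiff !permE /= modnMml mulSnr -modnDml.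
by rewrite -modz_nat -addrA -opprD -eqz_mod_dvd PoszD modz_mod.
Qed.

Lemma edge_len_mulmod_perm n : (2 * L < N)%N -> edge_len mulmod_perm n = L.
Proof.
move=> lt2LN; rewrite /edge_len (@step_eq_mod _ _ L%:Z) ?pdiff_bound //.
exact: dvdz_pdiff_mulmod_perm.
Qed.

End MulModPerm.

Theorem mainTheorem8 (N L : nat) (hN : (0 < N)%N) (hL : (0 < L)%N) :
  (exists p : {perm 'I_N}, perfect_star_path p L) <->
  [/\ coprime L N, (2 <= L)%N, (2 * L < N)%N & (5 <= N)%N].
Proof.
split=> [[p /(perfect_star_path_conditions hN hL)] // | [coLN ge2L lt2LN _]].
exists (mulmod_perm hN coLN); split=> n; rewrite edge_len_mulmod_perm //; lia.
Qed.
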